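(* Let $\Sigma$ be a finite alphabet and let $t$ be an unranked ordered $\Sigma$-labeled tree. Then $\|\mathrm{dag}(t)\| \le \|\mathrm{bdag}(t)\|$.
   Context: An unranked tree over $\Sigma$ is a finite rooted tree whose nodes are labeled by symbols of $\Sigma$ and in which the children of every node are linearly ordered (any node may have any finite number of children). The minimal dag $\mathrm{dag}(t)$ of a tree $t$ is obtained by merging all nodes that root identical subtrees (equal as ordered labeled trees); its nodes are in bijection with the distinct subtrees of $t$, and the node of a subtree $f(s_1,\dots,s_k)$ has $k$ ordered outgoing edges to the nodes of $s_1,\dots,s_k$. $\|\mathrm{dag}(t)\|$ denotes its number of nodes, i.e. the number of distinct subtrees of $t$. The first-child/next-sibling encoding $\mathrm{fcns}(t)$ is the binary tree with the same nodes and labels as $t$ in which the left child of a node $u$ is the first child of $u$ in $t$ (if it exists) and the right child of $u$ is the next sibling of $u$ in $t$ (if it exists); binary trees here have, at every node, an optional left child and an optional right child, which are distinguished. $\mathrm{bdag}(t)$ is the minimal dag of $\mathrm{fcns}(t)$ (merging identical subtrees of $\mathrm{fcns}(t)$, absent children not represented), and $\|\mathrm{bdag}(t)\|$ is its number of nodes, i.e. the number of distinct subtrees of $\mathrm{fcns}(t)$. *)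

From HB Require Import structures.
From mathcomp Require Import all_boot.
Set Implicit Arguments. Unset Strict Implicit. Unset Printing Implicit Defensive.

Inductive tree (S : Type) : Type := Node : S -> seq (tree S) -> tree S.
Arguments Node {S}.

(* Binary trees with optional (distinguished) left and right children;
   BLeaf represents an absent child. *)
Inductive btree (S : Type) : Type :=
| BLeaf : btree S
| BNode : S -> btree S -> btree S -> btree S.
Arguments BLeaf {S}.
Arguments BNode {S}.

Section Eq.
Variable S : eqType.

Fixpoint tree_eqb (t u : tree S) : bool :=
  match t, u with
  | Node a ts, Node b us =>
    (a == b) &&
    (fix aux (ts us : seq (tree S)) : bool :=
       match ts, us with
       | [::], [::] => true
       | t1 :: ts1, u1 :: us1 => tree_eqb t1 u1 && aux ts1 us1
       | _, _ => false
       end) ts us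
  end.

Fixpoint tree_eqbP_aux (t : tree S) : forall u, reflect (t = u) (tree_eqb t u).
Proof.
case: t => a ts [b us] /=.
case: (a =P b) => [<-|neq]; last by right; case.
rewrite /=.
have H : reflect (ts = us)
  ((fix aux (ts us : seq (tree S)) : bool :=
       match ts, us with
       | [::], [::] => true
       | t1 :: ts1, u1 :: us1 => tree_eqb t1 u1 && aux ts1 us1
       | _, _ => false
       end) ts us).
  elim: ts us => [|t1 ts1 IH] [|u1 us1] /=; try by [left | right].
  case: (tree_eqbP_aux t1 u1) => [<-|ne] /=; last by right; case.
  case: (IH us1) => [<-|ne]; [by left | by right; case].
by case: H => [<-|ne]; [left | right; case].
Defined.

Definition tree_eqbP : Equality.axiom tree_eqb := tree_eqbP_aux.
HB.instance Definition _ := hasDecEq.Build (tree S) tree_eqbP.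

Fixpoint btree_eqb (t u : btree S) : bool :=
  match t, u with
  | BLeaf, BLeaf => true
  | BNode a l r, BNode b l' r' => (a == b) && btree_eqb l l' && btree_eqb r r'
  | _, _ => false
  end.

Lemma btree_eqbP : Equality.axiom btree_eqb.
Proof.
elim=> [|a l IHl r IHr] [|b l' r'] /=; try by [left | right].
case: (a =P b) => [<-|ne] /=; last by right; case.
case: (IHl l') => [<-|ne] /=; last by right; case.
case: (IHr r') => [<-|ne]; [by left | by right; case].
Qed.
HB.instance Definition _ := hasDecEq.Build (btree S) btree_eqbP.
End Eq.

Fixpoint subtrees {S : Type} (t : tree S) : seq (tree S) :=
  match t with Node a ts => t :: flatten (map subtrees ts) end.

Fixpoint bsubtrees {S : Type} (t : btree S) : seq (btree S) :=
  match t with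
  | BLeaf => [::]
  | BNode _ l r => t :: bsubtrees l ++ bsubtrees r
  end.

(* First-child/next-sibling encoding: fcns_aux t rest encodes the node t
   whose next-sibling encoding is rest. *)
Fixpoint fcns_aux {S : Type} (t : tree S) (rest : btree S) : btree S :=
  match t with Node a ts => BNode a (foldr fcns_aux BLeaf ts) rest end.

Definition fcns {S : Type} (t : tree S) : btree S := fcns_aux t BLeaf.

(* ||dag(t)|| = number of distinct subtrees of t. *)
Definition dag_size {S : eqType} (t : tree S) : nat := size (undup (subtrees t)).

(* ||bdag(t)|| = number of distinct subtrees of fcns(t). *)
Definition bdag_size {S : eqType} (t : tree S) : nat :=
  size (undup (bsubtrees (fcns t))).

From mathcomp Require Import all_boot.

Set Implicit Arguments.
Unset Strict Implicit.
Unset Printing Implicit Defensive.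

(* Reading a binary tree as the forest [Node a (forest of l) :: forest of r]
   inverts the first-child/next-sibling encoding, so every subtree [s] of [t]
   is the head of the forest encoded by some subtree [fcns_aux s r] of
   [fcns t].  Hence distinct subtrees of [t] are images of distinct subtrees
   of [fcns t] under this decoding, and there are at most as many of them. *)

Lemma leq_size_undup_image (T U : eqType) (f : U -> T) (s : seq T) (s' : seq U) :
  {subset s <= map f s'} -> size (undup s) <= size (undup s').
Proof.
move=> sub_s; rewrite -(size_map f (undup s')).
apply: uniq_leq_size (undup_uniq s) _ => x; rewrite mem_undup.
by move=> /sub_s /mapP [y y_s' ->]; rewrite map_f // mem_undup.
Qed.

Section FirstChildNextSibling.
Variable S : eqType.

Lemma forall_in_nil (P : tree S -> Prop) : {in [::], forall v, P v}.
Proof. by []. Qed.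

Lemma forall_in_cons (P : tree S -> Prop) (u : tree S) (us : seq (tree S)) :
  P u -> {in us, forall v, P v} -> {in u :: us, forall v, P v}.
Proof. by move=> Pu Pus v; rewrite inE => /predU1P [-> | /Pus]. Qed.

Definition tree_ind_in (P : tree S -> Prop)
    (IHnode : forall a ts, {in ts, forall u, P u} -> P (Node a ts)) :
    forall t, P t :=
  fix IH t := let: Node a ts := t in IHnode a ts
    ((fix IHs (us : seq (tree S)) : {in us, forall v, P v} :=
        match us return {in us, forall v, P v} with
        | [::] => forall_in_nil P
        | u :: us' => forall_in_cons (IH u) (IHs us')
        end) ts).

Fixpoint forest_of_btree (b : btree S) : seq (tree S) :=
  match b with
  | BLeaf => [::]
  | BNode a l r => Node a (forest_of_btree l) :: forest_of_btree r
  end.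

Lemma forest_of_fcns_aux (t : tree S) (rest : btree S) :
  forest_of_btree (fcns_aux t rest) = t :: forest_of_btree rest.
Proof.
elim/tree_ind_in: t rest => a ts IH rest /=; congr (Node a _ :: _).
elim: ts IH => [|u ts IHts] IH //=.
rewrite IH ?mem_head // IHts // => v v_ts.
by apply: IH; rewrite inE v_ts orbT.
Qed.

Lemma bsubtrees_fcns_child (ts : seq (tree S)) (u : tree S) : u \in ts ->
  exists r, {subset bsubtrees (fcns_aux u r) <= bsubtrees (foldr fcns_aux BLeaf ts)}.
Proof.
elim: ts => [|v ts IH] //; rewrite inE => /predU1P [-> | /IH [r sub_r]].
  by exists (foldr fcns_aux BLeaf ts).
exists r => x /sub_r x_ts; case: v => a vs /=.
by rewrite inE mem_cat x_ts !orbT.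
Qed.

Lemma fcns_aux_subtree (t s : tree S) (rest : btree S) : s \in subtrees t ->
  exists r, fcns_aux s r \in bsubtrees (fcns_aux t rest).
Proof.
elim/tree_ind_in: t rest => a ts IH rest /=; rewrite inE.
case/predU1P => [-> | /flattenP [_ /mapP [u u_ts ->] s_u]].
  by exists rest; rewrite mem_head.
have [r sub_r] := bsubtrees_fcns_child u_ts.
have [r' s_r'] := IH u u_ts r s_u.
by exists r'; rewrite inE mem_cat (sub_r _ s_r') orbT.
Qed.

End FirstChildNextSibling.

Theorem lemma2 (Sigma : finType) (t : tree Sigma) : dag_size t <= bdag_size t.
Proof.
apply: (leq_size_undup_image (f := fun b => head t (forest_of_btree b))) => s s_t.
have [r s_r] := fcns_aux_subtree BLeaf s_t.
by apply/mapP; exists (fcns_aux s r); rewrite // forest_of_fcns_aux.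
Qed.
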